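(* Consider components $m\in[M]$ sharing a common finite action set $\mathcal X_A$ (i.e. $\mathcal X_A^m=\mathcal X_A$ for all $m$) and horizon $T$. The linear relaxation of MILP (IPd) is equivalent to the fluid formulation (F): there exists a feasible solution of one with a given objective value if and only if there exists a feasible solution of the other with the same objective value. In particular $z_{\mathrm F}=z_{\mathrm R}$, where $z_{\mathrm R}$ is the value of the linear relaxation of (IPd).
   Context: Each component $m$ is a POMDP $(\mathcal X_S^m,\mathcal X_O^m,\mathcal X_A,\mathfrak p^m,\mathbf r^m)$ with initial distribution $p^m(s)$, emissions $p^m(o|s)$, transitions $p^m(s'|s,a)$, reward $r^m(s,a,s')$. For a POMDP, $\mathcal Q^{\mathrm d}(T,\mathcal X_S,\mathcal X_O,\mathcal X_A,\mathfrak p)$ is the set of $(\tau,\delta)$ with $\delta^t_{a|o}\in\{0,1\}$, $\sum_a\delta^t_{a|o}=1$, nonnegative $\tau=((\tau^1_s),(\tau^t_{soa}),(\tau^t_{sas'}))$ with (i) $\tau^1_s=p(s)$; (ii) $\sum_{o,a}\tau^t_{soa}=\nu^t_s$, $\nu^1_s=\tau^1_s$, $\nu^t_s=\sum_{s'',a''}\tau^{t-1}_{s''a''s}$ ($t\ge2$); (iii) $\sum_{\bar s}\tau^t_{sa\bar s}=\sum_o\tau^t_{soa}$; (iv) $\tau^t_{sas'}=p(s'|s,a)\sum_{\bar s}\tau^t_{sa\bar s}$; (McCormick) $\tau^t_{soa}\le p(o|s)\nu^t_s$, $\tau^t_{soa}\le\delta^t_{a|o}$, $\tau^t_{soa}\ge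 p(o|s)\nu^t_s+\delta^t_{a|o}-1$. Its linear relaxation allows $\delta^t_{a|o}\in[0,1]$. MILP (IPd): maximize $\sum_t\sum_m\sum_{s,s'\in\mathcal X_S^m,a\in\mathcal X_A}r^m(s,a,s')\tau^{t,m}_{sas'}$ s.t. $(\tau^m,\delta^m)\in\mathcal Q^{\mathrm d}(T,\mathcal X_S^m,\mathcal X_O^m,\mathcal X_A,\mathfrak p^m)$ for all $m$, $\tau^{t,m}_a=\sum_{s,o}\tau^{t,m}_{soa}$, and $\tau^{t,m}_a=\tau^{t,m+1}_a$ for all $a\in\mathcal X_A$, $m\in[M-1]$, $t\in[T]$. Fluid formulation (F): maximize $\sum_t\sum_m\sum_{s,s',a}r^m(s,a,s')x^{t,m}_{sas'}$ over nonnegative $x^{1,m}_s$, $x^{t,m}_{sas'}$, $A^t_a$ s.t. $x^{1,m}_s=\sum_{a',s'}x^{1,m}_{sa's'}$; $\sum_{s',a'}x^{t,m}_{s'a's}=\sum_{a',s'}x^{t+1,m}_{sa's'}$ for $t\in[T-1]$; $x^{1,m}_s=p^m(s)$; $x^{t,m}_{sas'}=p^m(s'|s,a)\sum_{s''}x^{t,m}_{sas''}$; $\sum_{s,s'}x^{t,m}_{sas'}=A^t_a$ for all $a,m,t$. Its value is $z_{\mathrm F}$. *)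

From HB Require Import structures.
From mathcomp Require Import all_boot all_order all_algebra.
Set Implicit Arguments. Unset Strict Implicit. Unset Printing Implicit Defensive.
Import Order.TTheory GRing.Theory Num.Theory.
Local Open Scope ring_scope.

(* A POMDP component with common finite action set XA:
   finite state set S, finite observation set O,
   initial distribution p0 s = p(s), emissions pe s o = p(o|s),
   transitions pt s a s' = p(s'|s,a), rewards r s a s' = r(s,a,s'). *)
Record POMDP (R : realFieldType) (XA : finType) := {
  St : finType;
  Ob : finType;
  p0 : St -> R;
  pe : St -> Ob -> R;
  pt : St -> XA -> St -> R;
  rw : St -> XA -> St -> R }.
Arguments St {R XA} p.
Arguments Ob {R XA} p.
Arguments p0 {R XA} p _.
Arguments pe {R XA} p _ _.
Arguments pt {R XA} p _ _ _.
Arguments rw {R XA} p _ _ _.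

Definition valid_pomdp (R : realFieldType) (XA : finType) (P : POMDP R XA) : Prop :=
  (forall s, 0 <= p0 P s) /\ (\sum_(s : St P) p0 P s = 1) /\
  (forall s o, 0 <= pe P s o) /\ (forall s, \sum_(o : Ob P) pe P s o = 1) /\
  (forall s a s', 0 <= pt P s a s') /\ (forall s a, \sum_(s' : St P) pt P s a s' = 1).

(* Time is 0-based: t = 0, ..., T-1 stands for the paper's 1, ..., T. *)
Definition nuv (R : realFieldType) (XA : finType) (P : POMDP R XA)
  (tau1 : St P -> R) (tauT : nat -> St P -> XA -> St P -> R) (t : nat) (s : St P) : R :=
  if t is t'.+1 then \sum_(s'' : St P) \sum_(a'' : XA) tauT t' s'' a'' s else tau1 s.

(* The set Q^d(T, X_S, X_O, X_A, p); when relax = true, its linear relaxation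
   (delta in [0,1] instead of {0,1}). *)
Definition Qd (relax : bool) (R : realFieldType) (XA : finType) (T : nat) (P : POMDP R XA)
  (tau1 : St P -> R) (tauO : nat -> St P -> Ob P -> XA -> R)
  (tauT : nat -> St P -> XA -> St P -> R) (delta : nat -> Ob P -> XA -> R) : Prop :=
  (forall t o a, (t < T)%N ->
     if relax then 0 <= delta t o a <= 1 else (delta t o a == 0) || (delta t o a == 1)) /\
  (forall t o, (t < T)%N -> \sum_(a : XA) delta t o a = 1) /\
  (forall s, 0 <= tau1 s) /\
  (forall t s o a, (t < T)%N -> 0 <= tauO t s o a) /\
  (forall t s a s', (t < T)%N -> 0 <= tauT t s a s') /\
  (forall s, tau1 s = p0 P s) /\
  (forall t s, (t < T)%N ->
     \sum_(o : Ob P) \sum_(a : XA) tauO t s o a = nuv tau1 tauT t s) /\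
  (forall t s a, (t < T)%N ->
     \sum_(sb : St P) tauT t s a sb = \sum_(o : Ob P) tauO t s o a) /\
  (forall t s a s', (t < T)%N ->
     tauT t s a s' = pt P s a s' * \sum_(sb : St P) tauT t s a sb) /\
  (forall t s o a, (t < T)%N ->
     [/\ tauO t s o a <= pe P s o * nuv tau1 tauT t s,
         tauO t s o a <= delta t o a &
         pe P s o * nuv tau1 tauT t s + delta t o a - 1 <= tauO t s o a]).

Definition relax_values (R : realFieldType) (XA : finType) (M T : nat)
  (P : 'I_M -> POMDP R XA) (v : R) : Prop :=
  exists (tau1 : forall m : 'I_M, St (P m) -> R)
         (tauO : forall m : 'I_M, nat -> St (P m) -> Ob (P m) -> XA -> R)
         (tauT : forall m : 'I_M, nat -> St (P m) -> XA -> St (P m) -> R)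
         (delta : forall m : 'I_M, nat -> Ob (P m) -> XA -> R),
    (forall m : 'I_M, Qd true T (tau1 m) (tauO m) (tauT m) (delta m)) /\
    (let tauA (m : 'I_M) (t : nat) (a : XA) :=
         \sum_(s : St (P m)) \sum_(o : Ob (P m)) tauO m t s o a in
     forall (m : nat) (h1 : (m < M)%N) (h2 : (m.+1 < M)%N) (t : nat) (a : XA),
       (t < T)%N -> tauA (Ordinal h1) t a = tauA (Ordinal h2) t a) /\
    v = \sum_(t < T) \sum_(m : 'I_M) \sum_(s : St (P m)) \sum_(a : XA)
          \sum_(s' : St (P m)) rw (P m) s a s' * tauT m t s a s'.

Definition fluid_values (R : realFieldType) (XA : finType) (M T : nat)
  (P : 'I_M -> POMDP R XA) (v : R) : Prop :=
  exists (x1 : forall m : 'I_M, St (P m) -> R)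
         (x : forall m : 'I_M, nat -> St (P m) -> XA -> St (P m) -> R)
         (A : nat -> XA -> R),
    (forall m s, 0 <= x1 m s) /\
    (forall m t s a s', (t < T)%N -> 0 <= x m t s a s') /\
    (forall t a, (t < T)%N -> 0 <= A t a) /\
    (forall m s, x1 m s = \sum_(a' : XA) \sum_(s' : St (P m)) x m 0%N s a' s') /\
    (forall m t s, (t.+1 < T)%N ->
       \sum_(s' : St (P m)) \sum_(a' : XA) x m t s' a' s =
       \sum_(a' : XA) \sum_(s' : St (P m)) x m t.+1 s a' s') /\
    (forall m s, x1 m s = p0 (P m) s) /\
    (forall m t s a s', (t < T)%N ->
       x m t s a s' = pt (P m) s a s' * \sum_(s'' : St (P m)) x m t s a s'') /\
    (forall m t a, (t < T)%N ->
       \sum_(s : St (P m)) \sum_(s' : St (P m)) x m t s a s' = A t a) /\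
    v = \sum_(t < T) \sum_(m : 'I_M) \sum_(s : St (P m)) \sum_(a : XA)
          \sum_(s' : St (P m)) rw (P m) s a s' * x m t s a s'.

Definition is_opt_value (R : realFieldType) (V : R -> Prop) (z : R) : Prop :=
  V z /\ forall w, V w -> w <= z.

From HB Require Import structures.
From mathcomp Require Import all_boot all_order all_algebra.
From mathcomp.algebra_tactics Require Import lra.
Set Implicit Arguments. Unset Strict Implicit. Unset Printing Implicit Defensive.
Import Order.TTheory GRing.Theory Num.Theory.
Local Open Scope ring_scope.

(* The variables tau^t_{sas'} of the relaxation and x^t_{sas'} of (F) play the
   same role, and both problems share the objective; everything happens one
   component at a time, the only coupling being the common action marginals.
   - Relaxation -> (F): constraints (ii) and (iii) say that the inflow nu^t_s
     equals the outflow sum_{a,s'} tau^t_{sas'} ([relax_inflow]); this gives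
     the flow constraints of (F), and (iii) turns the coupling of consecutive
     components into a common marginal A^t_a ([consecutive_const]).
   - (F) -> relaxation: from the occupancies y^t_{sa} = sum_{s'} x^t_{sas'} put
     tau^t_{soa} = p(o|s) y^t_{sa} and delta^t_{a|o} = sum_s y^t_{sa}.  Each
     y^t is a probability matrix ([fluid_mass]), with row sums nu^t_s and
     column sums delta^t_{a|.}, so the McCormick inequalities hold by the
     general envelope bound [mccormick_envelope]. *)

Section Sums.
Variable R : realFieldType.

Lemma ler_term_sum (I : finType) (F : I -> R) (i : I) :
  (forall j, 0 <= F j) -> F i <= \sum_j F j.
Proof.
by move=> F_ge0; rewrite (bigD1 i) //= lerDl sumr_ge0.
Qed.

Lemma ler_col_total (S A : finType) (y : S -> A -> R) (a : A) :
  (forall s a, 0 <= y s a) -> \sum_s y s a <= \sum_s \sum_a' y s a'.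
Proof.
by move=> y_ge0; apply: ler_sum => s _; exact: ler_term_sum.
Qed.

Lemma mccormick_envelope (S A : finType) (y : S -> A -> R) (p : R) (s : S) (a : A) :
  (forall s a, 0 <= y s a) -> \sum_s \sum_a y s a = 1 -> 0 <= p <= 1 ->
  [/\ p * y s a <= p * \sum_a' y s a',
      p * y s a <= \sum_s' y s' a &
      p * \sum_a' y s a' + \sum_s' y s' a - 1 <= p * y s a].
Proof.
move=> y_ge0 mass1 /andP[p_ge0 p_le1].
have y_row : y s a <= \sum_a' y s a' by apply: ler_term_sum.
have y_col : y s a <= \sum_s' y s' a by apply: (ler_term_sum (F := y^~ a)).
have rest : \sum_a' y s a' - y s a <= 1 - \sum_s' y s' a.
  rewrite -mass1 -sumrB.
  apply: (ler_term_sum (F := fun s' => \sum_a' y s' a' - y s' a)) => s'.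
  by rewrite subr_ge0 ler_term_sum.
have p_rest : p * (\sum_a' y s a' - y s a) <= \sum_a' y s a' - y s a.
  by rewrite ler_piMl // subr_ge0.
have p_y : p * y s a <= y s a by rewrite ler_piMl.
split.
- exact: ler_wpM2l.
- exact: le_trans p_y y_col.
- rewrite mulrBr in p_rest; lra.
Qed.

Lemma consecutive_const (X : Type) (M : nat) (f : 'I_M -> X) :
  (forall m (h1 : (m < M)%N) (h2 : (m.+1 < M)%N), f (Ordinal h1) = f (Ordinal h2)) ->
  forall i j : 'I_M, f i = f j.
Proof.
move=> f_step i j; have M_gt0 : (0 < M)%N by apply: leq_ltn_trans (ltn_ord i).
suff to0 k (hk : (k < M)%N) : f (Ordinal hk) = f (Ordinal M_gt0).
  by case: i => [i hi]; case: j => [j hj]; rewrite !to0.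
elim: k hk => [|k IHk] hk; first by congr f; apply: val_inj.
by rewrite -(f_step k (ltnW hk)) IHk.
Qed.

Lemma opt_value_ext (V W : R -> Prop) :
  (forall v, V v <-> W v) -> forall z, is_opt_value V z <-> is_opt_value W z.
Proof.
move=> VW z; split=> -[opt_z opt_max]; split.
- exact/VW.
- by move=> w /VW; apply: opt_max.
- exact/VW.
- by move=> w /VW; apply: opt_max.
Qed.

End Sums.

Section Component.
Variables (R : realFieldType) (XA : finType) (T : nat) (Q : POMDP R XA).

Record fluid_component (x1 : St Q -> R) (x : nat -> St Q -> XA -> St Q -> R) : Prop := {
  fluid_x1_ge0 : forall s, 0 <= x1 s;
  fluid_x_ge0 : forall t s a s', (t < T)%N -> 0 <= x t s a s';
  fluid_init_flow : forall s, x1 s = \sum_(a : XA) \sum_(s' : St Q) x 0%N s a s';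
  fluid_flow : forall t s, (t.+1 < T)%N ->
    \sum_(s' : St Q) \sum_(a : XA) x t s' a s = \sum_(a : XA) \sum_(s' : St Q) x t.+1 s a s';
  fluid_init_p0 : forall s, x1 s = p0 Q s;
  fluid_trans : forall t s a s', (t < T)%N ->
    x t s a s' = pt Q s a s' * \sum_(s'' : St Q) x t s a s'' }.

Lemma relax_inflow tau1 tauO tauT delta t s :
  Qd true T tau1 tauO tauT delta -> (t < T)%N ->
  nuv tau1 tauT t s = \sum_(a : XA) \sum_(s' : St Q) tauT t s a s'.
Proof.
move=> [_ [_ [_ [_ [_ [_ [inflow [outflow _]]]]]]]] ltT.
rewrite -inflow // exchange_big /=.
by apply: eq_bigr => a _; rewrite outflow.
Qed.

Lemma relax_fluid_component tau1 tauO tauT delta :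
  (0 < T)%N -> Qd true T tau1 tauO tauT delta -> fluid_component tau1 tauT.
Proof.
move=> T_gt0 Qfeas; have inflow := relax_inflow _ Qfeas.
case: Qfeas => _ [_ [tau1_ge0 [_ [tauT_ge0 [init [_ [_ [trans _]]]]]]]].
split=> //.
- by move=> s; apply: (inflow 0%N).
- by move=> t s ltT; apply: (inflow t.+1).
Qed.

Definition occ (x : nat -> St Q -> XA -> St Q -> R) (t : nat) (s : St Q) (a : XA) : R :=
  \sum_(s' : St Q) x t s a s'.

Section FluidToRelax.
Variables (x1 : St Q -> R) (x : nat -> St Q -> XA -> St Q -> R).
Hypotheses (Qvalid : valid_pomdp Q) (xfeas : fluid_component x1 x).

Lemma occ_ge0 t s a : (t < T)%N -> 0 <= occ x t s a.
Proof.
by case: xfeas => _ x_ge0 _ _ _ _ ltT; apply: sumr_ge0 => s' _; apply: x_ge0.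
Qed.

Lemma fluid_nuv t s : (t < T)%N -> nuv x1 x t s = \sum_(a : XA) occ x t s a.
Proof.
by case: xfeas => _ _ init flow _ _; case: t => [|t] ltT //=; apply: flow.
Qed.

(* At every period the occupancies form a probability matrix: the initial
   distribution has mass 1 and the transitions preserve mass. *)
Lemma fluid_mass t : (t < T)%N -> \sum_(s : St Q) \sum_(a : XA) occ x t s a = 1.
Proof.
case: Qvalid => _ [p0_sum1 [_ [_ [_ pt_sum1]]]].
case: xfeas => _ _ init flow init_p0 trans.
elim: t => [|t IHt] ltT.
  by rewrite -p0_sum1; apply: eq_bigr => s _; rewrite -init_p0 init.
rewrite -(IHt (ltnW ltT)).
under eq_bigr => s _ do rewrite -flow //.
rewrite exchange_big /=; apply: eq_bigr => s' _.
rewrite exchange_big /=; apply: eq_bigr => a _.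
under eq_bigr => s _ do rewrite trans 1?ltnW //.
by rewrite -mulr_suml pt_sum1 mul1r.
Qed.

Lemma fluid_relax_component :
  Qd true T x1 (fun t s o a => pe Q s o * occ x t s a) x
     (fun t o a => \sum_(s : St Q) occ x t s a).
Proof.
case: Qvalid => _ [_ [pe_ge0 [pe_sum1 _]]].
case: (xfeas) => x1_ge0 x_ge0 _ _ init_p0 trans.
have pe_le1 s o : pe Q s o <= 1 by rewrite -(pe_sum1 s) ler_term_sum.
split.
  move=> t o a ltT; rewrite sumr_ge0 => [|s _]; last exact: occ_ge0.
  by rewrite -(fluid_mass ltT) ler_col_total // => s a'; apply: occ_ge0.
split; first by move=> t o ltT; rewrite exchange_big fluid_mass.
split=> //; split; first by move=> t s o a ltT; rewrite mulr_ge0 ?occ_ge0.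
do 2!split=> //; split.
  move=> t s ltT; rewrite fluid_nuv // exchange_big /=.
  by apply: eq_bigr => a _; rewrite -mulr_suml pe_sum1 mul1r.
split; first by move=> t s a ltT; rewrite -mulr_suml pe_sum1 mul1r.
split=> // t s o a ltT; rewrite fluid_nuv //.
by apply: mccormick_envelope; rewrite ?fluid_mass ?pe_ge0 ?pe_le1 // => s' a'; apply: occ_ge0.
Qed.

End FluidToRelax.

End Component.

Section System.
Variables (R : realFieldType) (XA : finType) (M T : nat) (P : 'I_M -> POMDP R XA).

Lemma relax_values_fluid v : (0 < T)%N -> relax_values T P v -> fluid_values T P v.
Proof.
move=> T_gt0 [tau1 [tauO [tauT [delta [Qfeas [coupling ->]]]]]].
pose tauA (m : 'I_M) t a := \sum_(s : St (P m)) \sum_(o : Ob (P m)) tauO m t s o a.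
have [A [A_ge0 tauA_A]] : exists A : nat -> XA -> R,
    (forall t a, (t < T)%N -> 0 <= A t a) /\
    (forall m t a, (t < T)%N -> tauA m t a = A t a).
  case: (posnP M) => [M0 | M_gt0].
    by exists (fun _ _ => 0); split=> // -[m hm]; exfalso; move: hm; rewrite M0.
  exists (tauA (Ordinal M_gt0)); split.
    move=> t a ltT; apply: sumr_ge0 => s _; apply: sumr_ge0 => o _.
    by case: (Qfeas (Ordinal M_gt0)) => _ [_ [_ [tauO_ge0 _]]]; apply: tauO_ge0.
  move=> m t a ltT.
  by apply: (consecutive_const (f := fun m => tauA m t a)) => k h1 h2; apply: coupling.
have comp m := relax_fluid_component T_gt0 (Qfeas m).
exists tau1, tauT, A; do ![split] => //; try by move=> m; case: (comp m).
move=> m t a ltT; rewrite -(tauA_A m) //; apply: eq_bigr => s _.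
by case: (Qfeas m) => _ [_ [_ [_ [_ [_ [_ [outflow _]]]]]]]; apply: outflow.
Qed.

Lemma fluid_values_relax v :
  (forall m, valid_pomdp (P m)) -> fluid_values T P v -> relax_values T P v.
Proof.
move=> Pvalid [x1 [x [A [x1_ge0 [x_ge0 [_ [init [flow [init_p0 [trans [marg ->]]]]]]]]]]].
exists x1, (fun m t s o a => pe (P m) s o * occ (x m) t s a), x,
  (fun m t o a => \sum_(s : St (P m)) occ (x m) t s a).
split.
  move=> m; apply: (fluid_relax_component (Pvalid m)).
  exact: Build_fluid_component (x1_ge0 m) (x_ge0 m) (init m) (flow m) (init_p0 m) (trans m).
split=> // tauA k h1 h2 t a ltT.
have tauA_A m : \sum_(s : St (P m)) \sum_(o : Ob (P m)) pe (P m) s o * occ (x m) t s a = A t a.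
  rewrite -(marg m t a ltT); apply: eq_bigr => s _.
  by rewrite -mulr_suml; case: (Pvalid m) => _ [_ [_ [-> _]]]; rewrite mul1r.
by rewrite /tauA !tauA_A.
Qed.

End System.

Theorem mainTheorem10 (R : realFieldType) (XA : finType) (M T : nat)
  (P : 'I_M -> POMDP R XA) (hP : forall m, valid_pomdp (P m)) (hT : (0 < T)%N) :
  (forall v : R, relax_values T P v <-> fluid_values T P v) /\
  (forall z : R, is_opt_value (relax_values T P) z <-> is_opt_value (fluid_values T P) z).
Proof.
have values_eq v : relax_values T P v <-> fluid_values T P v.
  by split; [apply: relax_values_fluid | apply: fluid_values_relax].
by split=> //; apply: opt_value_ext.
Qed.
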